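(* Let $H$ be a complex Hilbert space and $\{\mathcal{U}(t,s)\}_{t,s\in\mathbb{R}}$ a strongly continuous family of bounded linear operators on $H$ with $\mathcal{U}(t,t)=1$ and $\mathcal{U}(r,s)\mathcal{U}(t,r)=\mathcal{U}(t,s)$ for all $r,s,t\in\mathbb{R}$. For $t\in\mathbb{R}$ let $\mathcal{L}(t)x:=\lim_{h\to0}\frac1h[\mathcal{U}(t+h,t)x-x]$ on $D(\mathcal{L}(t)):=\{x:\text{the limit exists in }H\}$, and $D_\mathcal{L}:=\bigcap_{t}D(\mathcal{L}(t))$. Fix $t_0\in\mathbb{R}$ and $z\in D_\mathcal{L}$ with $z\neq0$ such that $t\mapsto\mathcal{U}(t,t_0)\mathcal{L}(t)z$ is continuous. Define $(x,y)_t:=(\mathcal{U}(t,t_0)x,\mathcal{U}(t,t_0)y)$, $\mathcal{P}(t):=(\cdot,z)_t(z,z)_t^{-1}z$, $\mathcal{Q}(t):=1-\mathcal{P}(t)$. For each $t$, let $K(t,\cdot)$ be the unique continuous solution of $$K(t,s)=-(\mathcal{U}(t,s)\mathcal{Q}(t)\mathcal{L}(t)z,\mathcal{Q}(s)\mathcal{L}(s)z)_s(z,z)_s^{-1}+\int_s^tK(t,r)\,(\mathcal{U}(r,s)z,\mathcal{Q}(s)\mathcal{L}(s)z)_s(z,z)_s^{-1}\,dr,$$ and let $\eta_{ts}:=\mathcal{U}(t,s)\mathcal{Q}(t)\mathcal{L}(t)z-\int_s^tK(t,r)\,\mathcal{U}(r,s)z\,dr$. Then for all $t,s\in\mathbb{R}$,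 $(\eta_{ts},z)_s=0$ and $K(t,s)=-(\eta_{tt_0},\eta_{st_0})(z,z)_s^{-1}$.
   Context: The scalar product $(\cdot,\cdot)$ on $H$ is conjugate-linear in its second argument. Vector-valued integrals are Bochner integrals. *)

From Stdlib Require Import Reals.
From Coquelicot Require Import Coquelicot.



(* A complex Hilbert space: a complete real normed module H (Coquelicot),
   equipped with a complex scalar multiplication extending the real one and an
   inner product, linear in the first and conjugate-linear in the second
   argument, which induces the norm of H. *)
Definition is_complex_hilbert {H : CompleteNormedModule R_AbsRing}
  (cscal : C -> H -> H) (inner : H -> H -> C) : Prop :=
  (forall (r : R) (x : H), cscal (RtoC r) x = scal r x) /\
  (forall x : H, cscal (RtoC 1) x = x) /\
  (forall (a b : C) (x : H), cscal a (cscal b x) = cscal (Cmult a b) x) /\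
  (forall (a b : C) (x : H), cscal (Cplus a b) x = plus (cscal a x) (cscal b x)) /\
  (forall (a : C) (x y : H), cscal a (plus x y) = plus (cscal a x) (cscal a y)) /\
  (forall x y w : H, inner (plus x y) w = Cplus (inner x w) (inner y w)) /\
  (forall (a : C) (x y : H), inner (cscal a x) y = Cmult a (inner x y)) /\
  (forall x y : H, inner y x = Cconj (inner x y)) /\
  (forall x : H, x <> zero -> (0 < Re (inner x x))%R) /\
  (forall x : H, norm x = sqrt (Re (inner x x))).

Definition is_bounded_linear {H : CompleteNormedModule R_AbsRing}
  (cscal : C -> H -> H) (A : H -> H) : Prop :=
  (forall x y : H, A (plus x y) = plus (A x) (A y)) /\
  (forall (a : C) (x : H), A (cscal a x) = cscal a (A x)) /\
  (exists M : R, forall x : H, (norm (A x) <= M * norm x)%R).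

Definition is_propagator {H : CompleteNormedModule R_AbsRing}
  (cscal : C -> H -> H) (U : R -> R -> H -> H) : Prop :=
  (forall t s : R, is_bounded_linear cscal (U t s)) /\
  (forall x : H, forall p : R * R,
      continuous (fun q : R * R => U (fst q) (snd q) x) p) /\
  (forall (t : R) (x : H), U t t x = x) /\
  (forall (r s t : R) (x : H), U r s (U t r x) = U t s x).

(* is_gen U t x y  <->  x \in D(L(t)) and L(t) x = y, i.e.
   (1/h) [U(t+h,t) x - x] --> y as h --> 0, h <> 0. *)
Definition is_gen {H : CompleteNormedModule R_AbsRing}
  (U : R -> R -> H -> H) (t : R) (x y : H) : Prop :=
  filterlim (fun h : R => scal (/ h) (minus (U (t + h) t x) x))
            (locally' 0%R) (locally y).

Definition ipt {H : CompleteNormedModule R_AbsRing} (inner : H -> H -> C)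
  (U : R -> R -> H -> H) (t0 t : R) (x y : H) : C :=
  inner (U t t0 x) (U t t0 y).

Definition Pt {H : CompleteNormedModule R_AbsRing} (cscal : C -> H -> H)
  (inner : H -> H -> C) (U : R -> R -> H -> H) (t0 : R) (z : H) (t : R)
  (x : H) : H :=
  cscal (Cdiv (ipt inner U t0 t x z) (ipt inner U t0 t z z)) z.

Definition Qt {H : CompleteNormedModule R_AbsRing} (cscal : C -> H -> H)
  (inner : H -> H -> C) (U : R -> R -> H -> H) (t0 : R) (z : H) (t : R)
  (x : H) : H :=
  minus x (Pt cscal inner U t0 z t x).

From Stdlib Require Import Reals Lra Classical.
From Coquelicot Require Import Coquelicot.

(* Transport everything to time [t0]: with [orbit s = U(s,t0) z] and
   [Ueta t s = U(s,t0) eta_{ts}], the products [(x,y)_s] become plain inner products.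
   By the fundamental theorem of calculus [d/ds Ueta t s = K(t,s) orbit s], and
   [d/ds orbit s = U(s,t0) L(s) z].  Pulling the functional
   [(., U(s,t0) Q(s) L(s) z) / (z,z)_s] through the integral turns the Volterra
   equation into [K(t,s) = -(Ueta t s, U(s,t0) Q(s) L(s) z) / (z,z)_s].  Hence
   [f(s) := (Ueta t s, orbit s)] solves the linear equation [f' = conj(c) f] with
   [c(s) = (L(s) z, z)_s / (z,z)_s], and [f(t) = (Q(t) L(t) z, z)_t = 0], so [f = 0].
   Then [(Ueta t s, Ueta u s)] has derivative
   [K(t,s) (orbit s, Ueta u s) + conj K(u,s) (Ueta t s, orbit s) = 0]; comparing its
   values at [s], where [Ueta s s = U(s,t0) Q(s) L(s) z], and at [t0] gives [K]. *)

Section FilterLimits.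
Context {T : Type} {F : (T -> Prop) -> Prop} {FF : Filter F}.

Lemma filterlim_C (f : T -> C) (a : C) :
  filterlim (fun p => Re (f p)) F (locally (Re a)) ->
  filterlim (fun p => Im (f p)) F (locally (Im a)) ->
  filterlim f F (locally a).
Proof.
  intros Hre Him. apply filterlim_locally. intros eps.
  apply filterlim_locally with (eps := eps) in Hre.
  apply filterlim_locally with (eps := eps) in Him.
  generalize (filter_and _ _ Hre Him). apply filter_imp. intros p [A B]. split; assumption.
Qed.

Lemma filterlim_Re (f : T -> C) (a : C) :
  filterlim f F (locally a) -> filterlim (fun p => Re (f p)) F (locally (Re a)).
Proof.
  intros Hf. apply (filterlim_comp _ _ _ f Re F (locally a) _ Hf).
  exact (linear_cont (U := C_R_NormedModule) (V := R_NormedModule) Re a is_linear_fst).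
Qed.

Lemma filterlim_Im (f : T -> C) (a : C) :
  filterlim f F (locally a) -> filterlim (fun p => Im (f p)) F (locally (Im a)).
Proof.
  intros Hf. apply (filterlim_comp _ _ _ f Im F (locally a) _ Hf).
  exact (linear_cont (U := C_R_NormedModule) (V := R_NormedModule) Im a is_linear_snd).
Qed.

Lemma filterlim_Cmult (f g : T -> C) (a b : C) :
  filterlim f F (locally a) -> filterlim g F (locally b) ->
  filterlim (fun p => Cmult (f p) (g p)) F (locally (Cmult a b)).
Proof.
  intros Hf Hg.
  apply (filterlim_comp_2 (G := locally (T := AbsRing_UniformSpace C_AbsRing) a)
            (H := locally (T := AbsRing_UniformSpace C_AbsRing) b) f g Cmult).
  - intros P HP. apply Hf, locally_C, HP.
  - intros P HP. apply Hg, locally_C, HP.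
  - intros P HP. apply (filterlim_mult a b), locally_C, HP.
Qed.

Lemma filterlim_plus_fct {W : NormedModule R_AbsRing} (f g : T -> W) (a b : W) :
  filterlim f F (locally a) -> filterlim g F (locally b) ->
  filterlim (fun p => plus (f p) (g p)) F (locally (plus a b)).
Proof. intros Hf Hg. exact (filterlim_comp_2 f g plus Hf Hg (filterlim_plus a b)). Qed.

Lemma filterlim_minus_fct {W : NormedModule R_AbsRing} (f g : T -> W) (a b : W) :
  filterlim f F (locally a) -> filterlim g F (locally b) ->
  filterlim (fun p => minus (f p) (g p)) F (locally (minus a b)).
Proof.
  intros Hf Hg. apply (filterlim_plus_fct _ _ _ _ Hf).
  exact (filterlim_comp _ _ _ g opp F (locally b) _ Hg (filterlim_opp b)).
Qed.

Lemma filterlim_scal_fct {W : NormedModule R_AbsRing} (k : T -> R) (f : T -> W) (c : R) (a : W) :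
  filterlim k F (locally c) -> filterlim f F (locally a) ->
  filterlim (fun p => scal (k p) (f p)) F (locally (scal c a)).
Proof. intros Hk Hf. exact (filterlim_comp_2 k f scal Hk Hf (filterlim_scal c a)). Qed.

Lemma filterlim_norm_sq {W : NormedModule R_AbsRing} (f : T -> W) (a : W) :
  filterlim f F (locally a) ->
  filterlim (fun p => norm (f p) * norm (f p)) F (locally (norm a * norm a)).
Proof.
  intros Hf.
  assert (Hn := filterlim_comp _ _ _ f norm F (locally a) _ Hf (filterlim_norm a)).
  exact (filterlim_comp_2 _ _ (mult (K := R_AbsRing)) Hn Hn (filterlim_mult _ _)).
Qed.
End FilterLimits.

Lemma ball_R_shift (x h : R) (d : posreal) : ball x d (x + h) <-> ball 0 d h.
Proof.
  unfold ball; simpl; unfold AbsRing_ball, abs, minus, plus, opp; simpl.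
  replace (x + h + - x) with (h + - 0) by ring. reflexivity.
Qed.

Lemma filterlim_shift (x : R) : filterlim (fun h => x + h) (locally' 0) (locally x).
Proof.
  intros P [d Hd]. exists d. intros h Hh _. apply Hd, ball_R_shift, Hh.
Qed.

Section Derivatives.
Context {W : NormedModule R_AbsRing}.

Lemma norm_scal_R (k : R) (v : W) : norm (scal k v) = Rabs k * norm v.
Proof.
  destruct (Req_dec k 0) as [-> | Hk].
  - rewrite Rabs_R0, Rmult_0_l, (scal_zero_l (V := W) v : scal 0 v = zero).
    exact (norm_zero (K := R_AbsRing) (V := W)).
  - apply Rle_antisym; [exact (norm_scal k v) |].
    apply (Rmult_le_reg_l (/ Rabs k)); [apply Rinv_0_lt_compat, Rabs_pos_lt, Hk |].
    rewrite <- Rmult_assoc, Rinv_l, Rmult_1_l by (apply Rabs_no_R0, Hk).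
    rewrite <- Rabs_inv.
    replace v with (scal (/ k) (scal k v)) at 1
      by (rewrite scal_assoc; change (mult (/ k) k) with (/ k * k);
          rewrite Rinv_l by exact Hk; exact (scal_one v)).
    exact (norm_scal (/ k) (scal k v)).
Qed.

Lemma difference_quotient_error (f : R -> W) (x h : R) (l : W) : h <> 0 ->
  norm (minus (scal (/ h) (minus (f (x + h)) (f x))) l)
  = / Rabs h * norm (minus (minus (f (x + h)) (f x)) (scal h l)).
Proof.
  intros Hh. rewrite <- Rabs_inv, <- norm_scal_R. f_equal.
  unfold minus at 3.
  rewrite (scal_distr_l (V := W)), (scal_opp_r (V := W)), (scal_assoc (V := W)).
  change (mult (/ h) h) with (/ h * h). rewrite Rinv_l by exact Hh.
  rewrite (scal_one (V := W)). reflexivity.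
Qed.

Lemma is_derive_difference_quotient (f : R -> W) (x : R) (l : W) :
  is_derive f x l <->
  filterlim (fun h => scal (/ h) (minus (f (x + h)) (f x))) (locally' 0) (locally l).
Proof.
  assert (Hshift : forall h, minus (x + h) x = h)
    by (intros h; unfold minus, plus, opp; simpl; ring).
  split.
  - intros [_ Hd]. specialize (Hd x (fun P HP => HP)).
    apply (filterlim_locally_ball_norm (K := R_AbsRing)). intros eps.
    destruct (Hd (pos_div_2 eps)) as [d Hball]. exists d. intros h Hh Hh0.
    specialize (Hball _ (proj2 (ball_R_shift x h d) Hh)). rewrite Hshift in Hball.
    unfold ball_norm. rewrite difference_quotient_error by exact Hh0.
    assert (Hh_pos : 0 < Rabs h) by (apply Rabs_pos_lt, Hh0).
    apply Rle_lt_trans with (/ Rabs h * (eps / 2 * Rabs h)).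
    + apply Rmult_le_compat_l; [left; apply Rinv_0_lt_compat, Hh_pos | exact Hball].
    + replace (/ Rabs h * (eps / 2 * Rabs h)) with (eps / 2) by (field; lra).
      generalize (cond_pos eps); lra.
  - intros Hq. split; [apply is_linear_scal_l |].
    intros x0 Hx0. apply (is_filter_lim_locally_unique (V := R_NormedModule)) in Hx0. subst x0.
    intros eps. apply (filterlim_locally_ball_norm (K := R_AbsRing)) with (eps := eps) in Hq.
    destruct Hq as [d Hq]. exists d. intros y Hy.
    destruct (Req_dec y x) as [-> | Hyx].
    + change (minus x x) with (x - x). rewrite Rminus_diag.
      assert (E : minus (minus (f x) (f x)) (scal 0 l) = (zero : W)).
      { rewrite minus_eq_zero, (scal_zero_l l : scal 0 l = zero). exact (minus_zero_r _). }
      apply Rle_trans with (norm (zero : W)); [apply Req_le; f_equal; exact E |].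
      rewrite norm_zero. apply Rmult_le_pos; [left; apply cond_pos | apply norm_ge_0].
    + set (h := minus y x).
      assert (Hh0 : h <> 0) by (unfold h, minus, plus, opp; simpl; lra).
      assert (Ey : x + h = y :> R) by (unfold h, minus, plus, opp; simpl; ring).
      rewrite <- Ey, ball_R_shift in Hy.
      specialize (Hq h Hy Hh0). unfold ball_norm in Hq.
      rewrite difference_quotient_error, Ey in Hq by exact Hh0.
      assert (Hh_pos : 0 < Rabs h) by (apply Rabs_pos_lt, Hh0).
      apply (Rmult_lt_compat_l (Rabs h)) in Hq; [| exact Hh_pos].
      rewrite <- Rmult_assoc, Rinv_r, Rmult_1_l in Hq by lra.
      left. rewrite Rmult_comm. exact Hq.
Qed.
End Derivatives.

Lemma is_derive_linear {W W' : NormedModule R_AbsRing} (L : W -> W') (f : R -> W) x l :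
  is_linear L -> is_derive f x l -> is_derive (fun r => L (f r)) x (L l).
Proof.
  intros HL Hf. unfold is_derive.
  apply filterdiff_ext_lin with (fun y => L (scal y l)).
  - apply (filterdiff_comp f L (fun y => scal y l) L Hf), filterdiff_linear, HL.
  - intros y. apply (linear_scal L HL).
Qed.

Lemma is_derive_zero_const {W : NormedModule R_AbsRing} (f : R -> W) :
  (forall x, is_derive f x zero) -> forall a b, f a = f b.
Proof.
  intros Hf a b. destruct (Rtotal_order a b) as [Hab | [-> | Hba]].
  - exact (eq_is_derive f a b (fun x _ => Hf x) Hab).
  - reflexivity.
  - symmetry. exact (eq_is_derive f b a (fun x _ => Hf x) Hba).
Qed.

Lemma is_RInt_linear {W W' : NormedModule R_AbsRing} (L : W -> W') (f : R -> W) a b I :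
  (forall x y, L (plus x y) = plus (L x) (L y)) ->
  (forall r x, L (scal r x) = scal r (L x)) ->
  continuous L I ->
  is_RInt f a b I -> is_RInt (fun r => L (f r)) a b (L I).
Proof.
  intros Hplus Hscal HI Hf.
  assert (L0 : L zero = zero).
  { rewrite <- (scal_zero_l (V := W) zero) at 1. rewrite Hscal. apply (scal_zero_l (V := W')). }
  assert (Hsum : forall (s : list (R * R)) (p : R * R),
    L (seq.foldr plus zero (seq.pairmap (fun x y => scal (fst y - fst x) (f (snd y))) p s))
    = seq.foldr plus zero
        (seq.pairmap (fun x y => scal (fst y - fst x) (L (f (snd y)))) p s)).
  { induction s as [| q s IH]; intros p; simpl; [exact L0 |].
    rewrite Hplus, Hscal, IH. reflexivity. }
  unfold is_RInt in *.
  apply filterlim_ext with (fun ptd => L (scal (sign (b - a)) (Riemann_sum f ptd))).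
  { intros ptd. rewrite Hscal. unfold Riemann_sum. rewrite Hsum. reflexivity. }
  exact (filterlim_comp _ _ _ _ L _ (locally I) _ Hf HI).
Qed.

Lemma RInt_linear {W W' : CompleteNormedModule R_AbsRing} (L : W -> W') (f : R -> W) a b :
  (forall x y, L (plus x y) = plus (L x) (L y)) ->
  (forall r x, L (scal r x) = scal r (L x)) ->
  continuous L (RInt f a b) -> ex_RInt f a b ->
  RInt (fun r => L (f r)) a b = L (RInt f a b).
Proof.
  intros Hplus Hscal HL Hf.
  exact (is_RInt_unique _ _ _ _ (is_RInt_linear L f a b _ Hplus Hscal HL (RInt_correct _ _ _ Hf))).
Qed.

Lemma linear_ode_zero_unique (f c : R -> C) (t : R) :
  (forall s, is_derive (V := C_R_NormedModule) f s (Cmult (c s) (f s))) ->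
  (forall s, continuous (fun r => Re (c r)) s) ->
  f t = RtoC 0 -> forall s, f s = RtoC 0.
Proof.
  intros Hf Hc Ht s.
  set (p := fun r => Re (f r)). set (q := fun r => Im (f r)).
  set (G := fun r => RInt (fun u => Re (c u)) t r).
  assert (Hp : forall r, is_derive p r (Re (c r) * p r - Im (c r) * q r)).
  { intros r. exact (is_derive_linear (W := C_R_NormedModule) Re f r _ is_linear_fst (Hf r)). }
  assert (Hq : forall r, is_derive q r (Re (c r) * q r + Im (c r) * p r)).
  { intros r. exact (is_derive_linear (W := C_R_NormedModule) Im f r _ is_linear_snd (Hf r)). }
  assert (HG : forall r, is_derive G r (Re (c r))).
  { intros r. apply (is_derive_RInt (fun u => Re (c u)) G t r); [| apply Hc].
    apply filter_forall. intros u. apply (RInt_correct (V := R_CompleteNormedModule)).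
    apply (ex_RInt_continuous (V := R_CompleteNormedModule)). intros; apply Hc. }
  (* [|f|^2 exp (-2 \int_t Re c)] is constant. *)
  set (psi := fun r => (p r * p r + q r * q r) * exp (-2 * G r)).
  assert (Hpsi : forall r, is_derive psi r 0).
  { intros r.
    assert (Hmult := fun u v => Rmult_comm u v : mult u v = mult v u).
    assert (Hnorm : is_derive (fun r => p r * p r + q r * q r) r
                      (2 * Re (c r) * (p r * p r + q r * q r))).
    { refine (eq_ind _ (is_derive _ r) (is_derive_plus _ _ r _ _
        (is_derive_mult p p r _ _ (Hp r) (Hp r) Hmult)
        (is_derive_mult q q r _ _ (Hq r) (Hq r) Hmult)) _ _).
      unfold plus, mult; simpl. ring. }
    assert (Hexp : is_derive (fun r => exp (-2 * G r)) r (exp (-2 * G r) * (-2 * Re (c r)))).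
    { refine (eq_ind _ (is_derive _ r) (is_derive_comp exp (fun r => -2 * G r) r _ _
        (is_derive_exp _) (is_derive_scal G r (-2) _ (HG r))) _ _).
      unfold scal, mult; simpl. unfold mult; simpl. ring. }
    refine (eq_ind _ (is_derive _ r) (is_derive_mult _ _ r _ _ Hnorm Hexp Hmult) _ _).
    unfold plus, mult; simpl. ring. }
  assert (Hpsi_t : psi t = 0) by (unfold psi, p, q; rewrite Ht; simpl; ring).
  assert (Hpsi_s : psi s = 0).
  { rewrite <- Hpsi_t. exact (is_derive_zero_const psi Hpsi s t). }
  assert (Hexp_pos := exp_pos (-2 * G s)).
  unfold psi in Hpsi_s. apply Rmult_integral in Hpsi_s as [Hpq | Hexp_zero]; [| lra].
  destruct (f s) as [ps qs] eqn:Hfs. unfold p, q in Hpq. rewrite Hfs in Hpq. simpl in Hpq.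
  unfold RtoC. f_equal; nra.
Qed.

Section ComplexInnerProduct.
Context {V : CompleteNormedModule R_AbsRing} (cscal : C -> V -> V) (inner : V -> V -> C).
Hypothesis HV : is_complex_hilbert cscal inner.

Lemma cscal_RtoC r x : cscal (RtoC r) x = scal r x. Proof. apply HV. Qed.
Lemma cscal_assoc a b x : cscal a (cscal b x) = cscal (Cmult a b) x. Proof. apply HV. Qed.
Lemma cscal_plus_l a b x : cscal (Cplus a b) x = plus (cscal a x) (cscal b x). Proof. apply HV. Qed.
Lemma cscal_plus_r a x y : cscal a (plus x y) = plus (cscal a x) (cscal a y). Proof. apply HV. Qed.
Lemma inner_plus_l x y w : inner (plus x y) w = Cplus (inner x w) (inner y w). Proof. apply HV. Qed.
Lemma inner_cscal_l a x y : inner (cscal a x) y = Cmult a (inner x y). Proof. apply HV. Qed.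
Lemma inner_conj x y : inner y x = Cconj (inner x y). Proof. apply HV. Qed.
Lemma inner_self_pos x : x <> zero -> 0 < Re (inner x x). Proof. apply HV. Qed.
Lemma norm_inner x : norm x = sqrt (Re (inner x x)). Proof. apply HV. Qed.

Lemma inner_plus_r w x y : inner w (plus x y) = Cplus (inner w x) (inner w y).
Proof. rewrite (inner_conj (plus x y) w), inner_plus_l, Cplus_conj, <- !inner_conj. reflexivity. Qed.

Lemma inner_cscal_r a x y : inner x (cscal a y) = Cmult (Cconj a) (inner x y).
Proof. rewrite (inner_conj (cscal a y) x), inner_cscal_l, Cmult_conj, <- inner_conj. reflexivity. Qed.

Lemma inner_scal_l r x y : inner (scal r x) y = Cmult (RtoC r) (inner x y).
Proof. rewrite <- cscal_RtoC. apply inner_cscal_l. Qed.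

Lemma inner_scal_r r x y : inner x (scal r y) = Cmult (RtoC r) (inner x y).
Proof.
  rewrite <- cscal_RtoC, inner_cscal_r. f_equal.
  unfold Cconj, RtoC; simpl. f_equal. ring.
Qed.

Lemma inner_opp_l x y : inner (opp x) y = Copp (inner x y).
Proof.
  replace (opp x) with (scal (-1) x) by exact (scal_opp_one x).
  rewrite inner_scal_l. unfold Cmult, Copp, RtoC; simpl. f_equal; ring.
Qed.

Lemma inner_opp_r x y : inner x (opp y) = Copp (inner x y).
Proof.
  replace (opp y) with (scal (-1) y) by exact (scal_opp_one y).
  rewrite inner_scal_r. unfold Cmult, Copp, RtoC; simpl. f_equal; ring.
Qed.

Lemma inner_minus_l x y w : inner (minus x y) w = Cminus (inner x w) (inner y w).
Proof. unfold minus. rewrite inner_plus_l, inner_opp_l. reflexivity. Qed.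

Lemma inner_minus_r w x y : inner w (minus x y) = Cminus (inner w x) (inner w y).
Proof. unfold minus. rewrite inner_plus_r, inner_opp_r. reflexivity. Qed.

Lemma inner_self_real x : inner x x = RtoC (Re (inner x x)).
Proof.
  assert (Hsym := inner_conj x x). destruct (inner x x) as [p q].
  injection Hsym. intros Hq. unfold RtoC; simpl. f_equal. lra.
Qed.

Lemma inner_self_norm x : Re (inner x x) = norm x * norm x.
Proof.
  rewrite norm_inner, sqrt_sqrt; [reflexivity |].
  destruct (classic (x = zero)) as [-> | Hx]; [| left; apply inner_self_pos, Hx].
  replace (zero : V) with (scal 0 (zero : V)) at 1 by exact (scal_zero_l zero).
  rewrite inner_scal_l. simpl. lra.
Qed.

Lemma Re_inner_polarization x y :
  Re (inner x y)
  = (norm (plus x y) * norm (plus x y) - norm (minus x y) * norm (minus x y)) / 4.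
Proof.
  rewrite <- !inner_self_norm, inner_plus_l, !inner_plus_r, inner_minus_l, !inner_minus_r.
  rewrite (inner_conj x y).
  destruct (inner x x), (inner x y), (inner y y). simpl. field.
Qed.

Lemma Im_inner x y : Im (inner x y) = Re (inner x (cscal Ci y)).
Proof. rewrite inner_cscal_r. destruct (inner x y). simpl. ring. Qed.

Lemma norm_cscal a x : norm (cscal a x) = Cmod a * norm x.
Proof.
  apply Rsqr_inj;
    [apply norm_ge_0 | apply Rmult_le_pos; [apply Cmod_ge_0 | apply norm_ge_0] |].
  unfold Rsqr. rewrite <- inner_self_norm, inner_cscal_l, inner_cscal_r, Cmult_assoc.
  rewrite <- Cmod2_conj, re_scal_l, inner_self_norm. ring.
Qed.

Lemma is_linear_cscal a : is_linear (cscal a).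
Proof.
  split.
  - apply cscal_plus_r.
  - intros r x. rewrite <- !cscal_RtoC, !cscal_assoc, Cmult_comm. reflexivity.
  - exists (Cmod a + 1). assert (Ha := Cmod_ge_0 a). split; [lra |].
    intros x. rewrite norm_cscal. assert (Hx := norm_ge_0 x). nra.
Qed.

Section InnerLimits.
Context {T : Type} {F : (T -> Prop) -> Prop} {FF : Filter F}.

Lemma filterlim_inner (f g : T -> V) (a b : V) :
  filterlim f F (locally a) -> filterlim g F (locally b) ->
  filterlim (fun p => inner (f p) (g p)) F (locally (inner a b)).
Proof.
  intros Hf Hg.
  assert (Hre : forall g b, filterlim g F (locally b) ->
            filterlim (fun p => Re (inner (f p) (g p))) F (locally (Re (inner a b)))).
  { intros g' b' Hg'. rewrite Re_inner_polarization.
    apply filterlim_ext with (fun p => scal (/ 4)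
      (minus (norm (plus (f p) (g' p)) * norm (plus (f p) (g' p)))
             (norm (minus (f p) (g' p)) * norm (minus (f p) (g' p))))).
    { intros p. rewrite Re_inner_polarization. unfold Rdiv. apply Rmult_comm. }
    replace ((_ - _) / 4) with (scal (/ 4) (minus (norm (plus a b') * norm (plus a b'))
                                                (norm (minus a b') * norm (minus a b'))))
      by (unfold Rdiv; apply Rmult_comm).
    apply (filterlim_scal_fct (W := R_NormedModule)); [apply filterlim_const |].
    apply (filterlim_minus_fct (W := R_NormedModule)); apply filterlim_norm_sq;
      [apply (filterlim_plus_fct (W := V)) | apply (filterlim_minus_fct (W := V))]; assumption. }
  apply filterlim_C; [apply Hre, Hg |].
  rewrite Im_inner. apply filterlim_ext with (fun p => Re (inner (f p) (cscal Ci (g p)))).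
  { intros p. symmetry. apply Im_inner. }
  apply Hre, (filterlim_comp _ _ _ g (cscal Ci) F (locally b) _ Hg).
  exact (linear_cont (cscal Ci) b (is_linear_cscal Ci)).
Qed.

Lemma filterlim_cscal (k : T -> C) (f : T -> V) (c : C) (a : V) :
  filterlim k F (locally c) -> filterlim f F (locally a) ->
  filterlim (fun p => cscal (k p) (f p)) F (locally (cscal c a)).
Proof.
  assert (Hsplit : forall c x, cscal c x = plus (scal (Re c) x) (scal (Im c) (cscal Ci x))).
  { intros c' x. rewrite <- !cscal_RtoC, cscal_assoc, <- cscal_plus_l. f_equal.
    destruct c'. unfold Cplus, Cmult, RtoC, Ci; simpl. f_equal; ring. }
  intros Hk Hf. rewrite Hsplit. apply filterlim_ext with
    (fun p => plus (scal (Re (k p)) (f p)) (scal (Im (k p)) (cscal Ci (f p)))).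
  { intros p. symmetry. apply Hsplit. }
  apply (filterlim_plus_fct (W := V)); apply (filterlim_scal_fct (W := V));
    [apply filterlim_Re, Hk | exact Hf | apply filterlim_Im, Hk |].
  apply (filterlim_comp _ _ _ f (cscal Ci) F (locally a) _ Hf).
  exact (linear_cont (cscal Ci) a (is_linear_cscal Ci)).
Qed.
End InnerLimits.

Lemma is_derive_inner (f g : R -> V) (x : R) (lf lg : V) :
  is_derive f x lf -> is_derive g x lg ->
  is_derive (V := C_R_NormedModule) (fun s => inner (f s) (g s)) x
    (Cplus (inner lf (g x)) (inner (f x) lg)).
Proof.
  intros Hf Hg.
  assert (Hgc : filterlim (fun h => g (x + h)) (locally' 0) (locally (g x))).
  { apply (filterlim_comp _ _ _ (fun h => x + h) g _ (locally x) _ (filterlim_shift x)).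
    exact (ex_derive_continuous g x (ex_intro _ lg Hg)). }
  apply is_derive_difference_quotient in Hf, Hg. apply is_derive_difference_quotient.
  apply filterlim_ext with (fun h =>
    Cplus (inner (scal (/ h) (minus (f (x + h)) (f x))) (g (x + h)))
          (inner (f x) (scal (/ h) (minus (g (x + h)) (g x))))).
  { intros h. rewrite inner_scal_l, inner_scal_r, inner_minus_l, inner_minus_r, scal_R_Cmult.
    change (minus ?A ?B) with (Cminus A B). ring. }
  apply (filterlim_plus_fct (W := C_R_NormedModule)); apply filterlim_inner;
    (assumption || apply filterlim_const).
Qed.

Lemma is_bounded_linear_is_linear (A : V -> V) : is_bounded_linear cscal A -> is_linear A.
Proof.
  intros (Hplus & Hcscal & M & HM). split.
  - exact Hplus.
  - intros r x. rewrite <- !cscal_RtoC. apply Hcscal.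
  - exists (Rmax M 1). split; [apply Rlt_le_trans with 1; [lra | apply Rmax_r] |].
    intros x. apply Rle_trans with (M * norm x); [apply HM |].
    apply Rmult_le_compat_r; [apply norm_ge_0 | apply Rmax_l].
Qed.
End ComplexInnerProduct.

Section Propagator.
Context {V : CompleteNormedModule R_AbsRing} {cscal : C -> V -> V} {inner : V -> V -> C}
  {U : R -> R -> V -> V} {t0 : R} {z : V} {Lz : R -> V} {K : R -> R -> C}.
Hypothesis HV : is_complex_hilbert cscal inner.
Hypothesis HU : is_propagator cscal U.
Hypothesis Hgen : forall t, is_gen U t z (Lz t).
Hypothesis Hz : z <> zero.
Hypothesis HLz : forall t, continuous (fun t' => U t' t0 (Lz t')) t.
Hypothesis HKc : forall t s, continuous (fun s' => K t s') s.
Hypothesis HK : forall t s,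
  K t s =
  Cplus
    (Copp (Cdiv (ipt inner U t0 s (U t s (Qt cscal inner U t0 z t (Lz t)))
                                  (Qt cscal inner U t0 z s (Lz s)))
                (ipt inner U t0 s z z)))
    (RInt (V := C_R_CompleteNormedModule)
       (fun r => Cmult (K t r)
          (Cdiv (ipt inner U t0 s (U r s z) (Qt cscal inner U t0 z s (Lz s)))
                (ipt inner U t0 s z z)))
       s t).

Definition orbit r := U r t0 z.
Definition orbit_gen r := U r t0 (Lz r).
Definition orbit_norm2 r := inner (orbit r) (orbit r).
Definition orbit_coef r := Cdiv (inner (orbit_gen r) (orbit r)) (orbit_norm2 r).
Definition orbit_QLz r := U r t0 (Qt cscal inner U t0 z r (Lz r)).
Definition eta t s :=
  minus (U t s (Qt cscal inner U t0 z t (Lz t)))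
        (RInt (V := V) (fun r => cscal (K t r) (U r s z)) s t).
Definition Ueta t s := U s t0 (eta t s).

Lemma U_linear a b : is_linear (U a b).
Proof. apply (is_bounded_linear_is_linear _ _ HV), HU. Qed.

Lemma U_cscal a b c x : U a b (cscal c x) = cscal c (U a b x).
Proof. apply HU. Qed.

Lemma U_refl t x : U t t x = x.
Proof. apply HU. Qed.

Lemma U_comp r s t x : U r s (U t r x) = U t s x.
Proof. apply HU. Qed.

Lemma continuous_U_left s x r : continuous (fun r => U r s x) r.
Proof.
  apply (continuous_comp_2 (fun r => r) (fun _ => s) (fun a b => U a b x));
    [apply continuous_id | apply continuous_const | apply HU].
Qed.

Lemma orbit_neq0 r : orbit r <> zero.
Proof.
  intros Hr. apply Hz.
  rewrite <- (U_refl r z), <- (U_comp t0 r r z). fold (orbit r). rewrite Hr.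
  apply (linear_zero _ (U_linear t0 r)).
Qed.

Lemma orbit_norm2_pos r : 0 < Re (orbit_norm2 r).
Proof. apply (inner_self_pos _ _ HV), orbit_neq0. Qed.

Lemma orbit_norm2_neq0 r : orbit_norm2 r <> RtoC 0.
Proof. intros H0. generalize (orbit_norm2_pos r). rewrite H0. simpl. lra. Qed.

Lemma orbit_QLz_decomp r : orbit_QLz r = minus (orbit_gen r) (cscal (orbit_coef r) (orbit r)).
Proof.
  unfold orbit_QLz, Qt, Pt. rewrite (linear_minus _ _ _ (U_linear r t0)), U_cscal. reflexivity.
Qed.

Lemma is_derive_orbit r : is_derive orbit r (orbit_gen r).
Proof.
  assert (Hr : is_derive (fun r' => U r' r z) r (Lz r)).
  { apply is_derive_difference_quotient.
    apply filterlim_ext with (2 := Hgen r). intros h. rewrite U_refl. reflexivity. }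
  apply (is_derive_ext (fun r' => U r t0 (U r' r z))); [intros; apply U_comp |].
  exact (is_derive_linear _ _ r _ (U_linear r t0) Hr).
Qed.

Lemma continuous_kernel_orbit t s r : continuous (fun r => cscal (K t r) (U r s z)) r.
Proof. apply (filterlim_cscal _ _ HV); [apply HKc | apply continuous_U_left]. Qed.

Lemma ex_RInt_kernel_orbit t s a b : ex_RInt (fun r => cscal (K t r) (U r s z)) a b.
Proof. apply ex_RInt_continuous. intros r _. apply continuous_kernel_orbit. Qed.

Lemma Ueta_RInt t s :
  Ueta t s = minus (orbit_QLz t) (RInt (fun r => cscal (K t r) (orbit r)) s t).
Proof.
  unfold Ueta, eta. rewrite (linear_minus _ _ _ (U_linear s t0)), U_comp. f_equal.
  rewrite <- (RInt_linear (W := V) (W' := V) (U s t0)).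
  - apply RInt_ext. intros r _. rewrite U_cscal, U_comp. reflexivity.
  - exact (linear_plus _ (U_linear s t0)).
  - exact (linear_scal _ (U_linear s t0)).
  - exact (linear_cont _ _ (U_linear s t0)).
  - apply ex_RInt_kernel_orbit.
Qed.

Lemma K_Ueta t s : K t s = Copp (Cdiv (inner (Ueta t s) (orbit_QLz s)) (orbit_norm2 s)).
Proof.
  set (coord := fun v => Cdiv (inner v (orbit_QLz s)) (orbit_norm2 s)).
  assert (Hint : RInt (V := C_R_CompleteNormedModule) (fun r => Cmult (K t r)
                   (Cdiv (ipt inner U t0 s (U r s z) (Qt cscal inner U t0 z s (Lz s)))
                         (ipt inner U t0 s z z))) s t
                 = coord (RInt (fun r => cscal (K t r) (orbit r)) s t)).
  { rewrite <- (RInt_linear (W := V) (W' := C_R_CompleteNormedModule) coord).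
    - apply RInt_ext. intros r _. unfold coord, ipt. rewrite U_comp, (inner_cscal_l _ _ HV).
      unfold orbit_QLz, orbit_norm2, orbit. apply Cmult_assoc.
    - intros x y. unfold coord. rewrite (inner_plus_l _ _ HV). apply Cmult_plus_distr_r.
    - intros r x. unfold coord. rewrite (inner_scal_l _ _ HV), scal_R_Cmult.
      symmetry. apply Cmult_assoc.
    - apply filterlim_Cmult; [| apply filterlim_const].
      apply (filterlim_inner _ _ HV); [apply filterlim_id | apply filterlim_const].
    - apply (ex_RInt_kernel_orbit t t0). }
  rewrite HK, Hint, Ueta_RInt. unfold coord, ipt. rewrite U_comp, (inner_minus_l _ _ HV).
  unfold orbit_QLz, orbit_norm2, orbit. unfold Cdiv. ring.
Qed.

Lemma Ueta_diag t : Ueta t t = orbit_QLz t.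
Proof. rewrite Ueta_RInt, RInt_point. exact (minus_zero_r _). Qed.

Lemma Ueta_at_t0 t : Ueta t t0 = eta t t0.
Proof. apply U_refl. Qed.

Lemma is_derive_Ueta t s : is_derive (Ueta t) s (cscal (K t s) (orbit s)).
Proof.
  set (k := fun r => cscal (K t r) (orbit r)).
  apply (is_derive_ext (fun s => minus (orbit_QLz t) (RInt k s t)));
    [intros; symmetry; apply Ueta_RInt |].
  refine (eq_ind _ (is_derive _ s) (is_derive_minus _ _ s _ _ (is_derive_const _ s)
            (is_derive_RInt' k _ s t _ (continuous_kernel_orbit t t0 s))) _ _).
  - apply filter_forall. intros a. apply RInt_correct, (ex_RInt_kernel_orbit t t0).
  - unfold minus. rewrite plus_zero_l. apply opp_opp.
Qed.

Lemma Re_orbit_coef r :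
  Re (orbit_coef r) = Re (inner (orbit_gen r) (orbit r)) / Re (orbit_norm2 r).
Proof.
  assert (Hpos := orbit_norm2_pos r).
  unfold orbit_coef, Cdiv. unfold orbit_norm2 at 1. rewrite (inner_self_real _ _ HV (orbit r)).
  rewrite <- RtoC_inv by (apply Rgt_not_eq, Hpos). apply re_scal_r.
Qed.

Lemma continuous_Re_orbit_coef r : continuous (fun r => Re (orbit_coef r)) r.
Proof.
  apply (continuous_ext (fun r => Re (inner (orbit_gen r) (orbit r)) * / Re (orbit_norm2 r)));
    [intros; symmetry; apply Re_orbit_coef |].
  assert (Horbit : forall r, continuous orbit r) by (intros; apply continuous_U_left).
  apply (continuous_mult (K := R_AbsRing)).
  - apply filterlim_Re, (filterlim_inner _ _ HV); [apply HLz | apply Horbit].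
  - apply continuous_Rinv_comp; [| apply Rgt_not_eq, orbit_norm2_pos].
    apply filterlim_Re, (filterlim_inner _ _ HV); apply Horbit.
Qed.

Lemma inner_Ueta_orbit_eq0 t s : inner (Ueta t s) (orbit s) = RtoC 0.
Proof.
  apply (linear_ode_zero_unique (fun r => inner (Ueta t r) (orbit r)) (fun r => Cconj (orbit_coef r)) t).
  - intros r.
    refine (eq_ind _ (is_derive _ r) (is_derive_inner _ _ HV _ _ r _ _
              (is_derive_Ueta t r) (is_derive_orbit r)) _ _).
    rewrite (inner_cscal_l _ _ HV), (K_Ueta t r), orbit_QLz_decomp, (inner_minus_r _ _ HV),
      (inner_cscal_r _ _ HV).
    fold (orbit_norm2 r). assert (Hn := orbit_norm2_neq0 r).
    match goal with |- ?a = ?b => change (@eq C a b) end. field. exact Hn.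
  - intros r. apply (continuous_ext (fun r => Re (orbit_coef r))); [intros; symmetry; apply re_conj |].
    apply continuous_Re_orbit_coef.
  - rewrite Ueta_diag, orbit_QLz_decomp, (inner_minus_l _ _ HV), (inner_cscal_l _ _ HV).
    unfold orbit_coef. fold (orbit_norm2 t). assert (Hn := orbit_norm2_neq0 t). field. exact Hn.
Qed.

Lemma inner_Ueta_Ueta_const t u s : inner (Ueta t s) (Ueta u s) = inner (Ueta t t0) (Ueta u t0).
Proof.
  apply (is_derive_zero_const (W := C_R_NormedModule) (fun r => inner (Ueta t r) (Ueta u r))).
  intros r.
  refine (eq_ind _ (is_derive _ r) (is_derive_inner _ _ HV _ _ r _ _
            (is_derive_Ueta t r) (is_derive_Ueta u r)) _ _).
  rewrite (inner_cscal_l _ _ HV), (inner_cscal_r _ _ HV), (inner_conj _ _ HV (Ueta u r)),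
    !inner_Ueta_orbit_eq0.
  replace (Cconj (RtoC 0)) with (RtoC 0) by (unfold Cconj, RtoC; simpl; f_equal; ring).
  rewrite !Cmult_0_r, Cplus_0_r. reflexivity.
Qed.
End Propagator.

Theorem corollary6
  (H : CompleteNormedModule R_AbsRing) (cscal : C -> H -> H)
  (inner : H -> H -> C) (U : R -> R -> H -> H)
  (t0 : R) (z : H) (Lz : R -> H) (K : R -> R -> C) :
  is_complex_hilbert cscal inner ->
  is_propagator cscal U ->
  (* z \in D_L, with Lz t = L(t) z *)
  (forall t : R, is_gen U t z (Lz t)) ->
  z <> zero ->
  (forall t : R, continuous (fun t' : R => U t' t0 (Lz t')) t) ->
  (* for each t, K(t,.) is the continuous solution of the Volterra equation *)
  (forall t s : R, continuous (fun s' : R => K t s') s) ->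
  (forall t s : R,
      K t s =
      Cplus
        (Copp (Cdiv (ipt inner U t0 s (U t s (Qt cscal inner U t0 z t (Lz t)))
                                      (Qt cscal inner U t0 z s (Lz s)))
                    (ipt inner U t0 s z z)))
        (RInt (V := C_R_CompleteNormedModule)
           (fun r : R =>
              Cmult (K t r)
                (Cdiv (ipt inner U t0 s (U r s z) (Qt cscal inner U t0 z s (Lz s)))
                      (ipt inner U t0 s z z)))
           s t)) ->
  let eta := fun t s : R =>
    minus (U t s (Qt cscal inner U t0 z t (Lz t)))
          (RInt (V := H) (fun r : R => cscal (K t r) (U r s z)) s t) in
  forall t s : R,
    ipt inner U t0 s (eta t s) z = RtoC 0 /\
    K t s = Copp (Cdiv (inner (eta t t0) (eta s t0)) (ipt inner U t0 s z z)).
Proof.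
  intros HV HU Hgen Hz HLz HKc HK eta t s. split.
  - exact (inner_Ueta_orbit_eq0 HV HU Hgen Hz HLz HKc HK t s).
  - rewrite (K_Ueta HV HU HKc HK t s), <- (Ueta_diag HV HU HKc s),
      (inner_Ueta_Ueta_const HV HU Hgen Hz HLz HKc HK t s s), !(Ueta_at_t0 HU).
    reflexivity.
Qed.
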